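(* Let $M,N$ be weights of $\mathbb{R}^m,\mathbb{R}^n$, let $A\in\mathbb{R}^{m\times n}$ with $MA=AN$, and let $K\subseteq\mathbb{R}^n$ be a closed cone. Then $$A^{[\dagger]}\circ A\circ K\subseteq K\iff A^{[\dagger]}\circ A\circ K^{[*]}\subseteq K^{[*]}.$$
   Context: A weight is a real symmetric matrix $W$ with $W^2=I$. $\mathbb{R}^m$ and $\mathbb{R}^n$ carry weights $M\in\mathbb{R}^{m\times m}$ and $N\in\mathbb{R}^{n\times n}$, respectively. The indefinite inner product on the space with weight $W$ is $[x,y]=\langle x,Wy\rangle$. Indefinite matrix product: if $B$ has $p$ columns and $C$ has $p$ rows (or is a vector in $\mathbb{R}^p$), $p\in\{m,n\}$, and $W$ is the weight of $\mathbb{R}^p$, then $B\circ C:=BWC$. $I$ denotes an identity matrix of the appropriate size. Indefinite adjoint of $B\in\mathbb{R}^{p\times q}$: $B^{[*]}:=W_qB^TW_p$, where $W_p,W_q$ are the weights of $\mathbb{R}^p,\mathbb{R}^q$. Indefinite Moore–Penrose inverse: for $A\in\mathbb{R}^{m\times n}$, $A^{[\dagger]}$ is the unique $X\in\mathbb{R}^{n\times m}$ such that - $A\circ X\circ A=A$, - $X\circ A\circ X=X$, - $(A\circ X)^{[*]}=A\circ X$, - $(X\circ A)^{[*]}=X\circ A$. It exists and equals $NA^{\dagger}M$, where $A^\dagger$ is the usual Moore–Penrose inverse. A cone is a nonempty set closed under addition and under multiplication by nonnegative scalars. For $S$ a subset of $\mathbb{R}^p$ with weight $W$, the dual is $S^{[*]}=\{x\in\mathbb{R}^p:[x,t]\ge0\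 \forall t\in S\}$. For a matrix $B$ and a set $S$, $B\circ S=\{B\circ s:s\in S\}$. *)

From Stdlib Require Import Reals.
From mathcomp Require Import all_boot.
From mathcomp Require Import matrix.
Set Implicit Arguments. Unset Strict Implicit. Unset Printing Implicit Defensive.
Local Open Scope R_scope.

Definition rsum (n : nat) (F : 'I_n -> R) : R := \big[Rplus/R0]_(i < n) F i.

Definition mmul (m p q : nat) (B : 'M[R]_(m, p)) (C : 'M[R]_(p, q)) : 'M[R]_(m, q) :=
  \matrix_(i, j) rsum (fun k => B i k * C k j).

Definition idm (n : nat) : 'M[R]_n := \matrix_(i, j) (if i == j then 1 else 0).

Definition is_weight (n : nat) (W : 'M[R]_n) : Prop :=
  trmx W = W /\ mmul W W = idm n.

Definition vadd (n : nat) (x y : 'cV[R]_n) : 'cV[R]_n := \matrix_(i, j) (x i j + y i j).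
Definition vscale (n : nat) (a : R) (x : 'cV[R]_n) : 'cV[R]_n := \matrix_(i, j) (a * x i j).

Definition iprod (n : nat) (W : 'M[R]_n) (x y : 'cV[R]_n) : R :=
  rsum (fun i => x i ord0 * (mmul W y) i ord0).

Definition imul (m p q : nat) (W : 'M[R]_p) (B : 'M[R]_(m, p)) (C : 'M[R]_(p, q))
  : 'M[R]_(m, q) := mmul (mmul B W) C.

Definition iadj (p q : nat) (Wp : 'M[R]_p) (Wq : 'M[R]_q) (B : 'M[R]_(p, q))
  : 'M[R]_(q, p) := mmul (mmul Wq (trmx B)) Wp.

(* X is the indefinite Moore-Penrose inverse A^[dagger] of A in R^{m x n}
   (the unique matrix satisfying the four Penrose-type equations) *)
Definition is_imp (m n : nat) (M : 'M[R]_m) (N : 'M[R]_n)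
  (A : 'M[R]_(m, n)) (X : 'M[R]_(n, m)) : Prop :=
  [/\ imul M (imul N A X) A = A,
      imul N (imul M X A) X = X,
      iadj M M (imul N A X) = imul N A X
    & iadj N N (imul M X A) = imul M X A].

Definition vset (n : nat) := 'cV[R]_n -> Prop.

Definition is_cone (n : nat) (K : vset n) : Prop :=
  (exists x, K x) /\
  (forall x y, K x -> K y -> K (vadd x y)) /\
  (forall a x, 0 <= a -> K x -> K (vscale a x)).

(* closed in the standard topology of R^n (sequential closedness,
   convergence = coordinatewise convergence) *)
Definition is_closed (n : nat) (K : vset n) : Prop :=
  forall (u : nat -> 'cV[R]_n) (x : 'cV[R]_n),
    (forall k, K (u k)) ->
    (forall i j, Un_cv (fun k => u k i j) (x i j)) -> K x.

Definition idual (n : nat) (W : 'M[R]_n) (S : vset n) : vset n :=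
  fun x => forall t, S t -> 0 <= iprod W x t.

Definition iimg (p q : nat) (W : 'M[R]_p) (B : 'M[R]_(q, p)) (S : vset p) : vset q :=
  fun y => exists2 s, S s & y = imul W B s.

Definition vsubset (n : nat) (S T : vset n) : Prop := forall x, S x -> T x.

(* With M A = A N, the Penrose equations make S := N X M A symmetric with
   S N S = S N, so Q := X M A N (the map s |-> A^[dagger] o A o s) satisfies
   (N Q)^T = N Q, i.e. [Q s, t] = [s, Q t].  Hence Q K <= K gives
   Q K^[*] <= K^[*] at once.  Conversely, if Q s is not in K, the nearest point
   p of the closed cone K to z := Q s gives y := p - z with y.t >= 0 on K and
   y.z < 0; then N y lies in K^[*], and [Q (N y), s] = y.(Q s) < 0 contradicts
   Q K^[*] <= K^[*]. *)

From Stdlib Require Import Reals Lra Classical ClassicalEpsilon.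
From mathcomp Require Import all_boot all_algebra.
From mathcomp Require Import Rstruct.
Set Implicit Arguments. Unset Strict Implicit. Unset Printing Implicit Defensive.
Local Open Scope R_scope.

Lemma rsumD n (F G : 'I_n -> R) : rsum (fun i => F i + G i) = rsum F + rsum G.
Proof. exact: big_split. Qed.

Lemma rsumZ n a (F : 'I_n -> R) : rsum (fun i => a * F i) = a * rsum F.
Proof. by rewrite /rsum -big_distrr. Qed.

Lemma rsum_ge0 n (F : 'I_n -> R) : (forall i, 0 <= F i) -> 0 <= rsum F.
Proof. by move=> F_ge0; rewrite /rsum; elim/big_ind: _ => //; [lra | move=> x y; lra]. Qed.

Lemma rsum_ge_term n (F : 'I_n -> R) j : (forall i, 0 <= F i) -> F j <= rsum F.
Proof.
move=> F_ge0; rewrite /rsum (bigD1 j) //=.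
set rest := (X in _ <= _ + X); suff : 0 <= rest by lra.
by rewrite /rest; elim/big_ind: _ => //; [lra | move=> x y; lra].
Qed.

Lemma Un_cv_const (c : R) : Un_cv (fun _ => c) c.
Proof. by move=> e e_gt0; exists 0%nat => k _; rewrite /R_dist Rminus_diag Rabs_R0. Qed.

Lemma Un_cv_rsum n (F : nat -> 'I_n -> R) f :
  (forall i, Un_cv (fun k => F k i) (f i)) -> Un_cv (fun k => rsum (F k)) (rsum f).
Proof.
move=> cvF; rewrite /rsum unlock; elim: (index_enum _) => [|i r IHr] /=.
  exact: Un_cv_const.
exact: CV_plus.
Qed.

Definition dot n (x y : 'cV[R]_n) : R := rsum (fun i => x i ord0 * y i ord0).

Definition dist2 n (x y : 'cV[R]_n) : R :=
  rsum (fun i => (x i ord0 - y i ord0) * (x i ord0 - y i ord0)).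

Lemma dotC n (x y : 'cV[R]_n) : dot x y = dot y x.
Proof. by apply: eq_bigr => i _; rewrite Rmult_comm. Qed.

Lemma dist2_ge0 n (x y : 'cV[R]_n) : 0 <= dist2 x y.
Proof. by apply: rsum_ge0 => i; apply: Rle_0_sqr. Qed.

Lemma dist2_gt0 n (x y : 'cV[R]_n) : x <> y -> 0 < dist2 x y.
Proof.
move=> x_neq_y; case: (Rle_lt_dec (dist2 x y) 0) => // dist_le0; case: x_neq_y.
apply/matrixP => i j; rewrite (fintype.ord1 j); apply: Rminus_diag_uniq; apply: Rsqr_0_uniq.
have term_le := rsum_ge_term i (fun k => Rle_0_sqr (x k ord0 - y k ord0)).
have := Rle_0_sqr (x i ord0 - y i ord0).
rewrite /Rsqr in term_le *; rewrite -/(dist2 x y) in term_le; lra.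
Qed.

Lemma dist2E n (x y : 'cV[R]_n) : dist2 x y = dot x x + -2 * dot x y + dot y y.
Proof. by rewrite /dist2 /dot -rsumZ -!rsumD; apply: eq_bigr => i _; ring. Qed.

Lemma dot_vadd_vscale n (x y t : 'cV[R]_n) a :
  dot (vadd x (vscale a y)) t = dot x t + a * dot y t.
Proof. by rewrite /dot -rsumZ -rsumD; apply: eq_bigr => i _; rewrite !mxE; ring. Qed.

Lemma dist2_midpoint n (z x y : 'cV[R]_n) :
  dist2 x y = 2 * dist2 z x + 2 * dist2 z y + -4 * dist2 z (vscale (/2) (vadd x y)).
Proof. by rewrite /dist2 -!rsumZ -!rsumD; apply: eq_bigr => i _; rewrite !mxE; field. Qed.

Lemma Un_cv_inv_succ : Un_cv (fun k => / (INR k + 1)) 0.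
Proof. exact: RinvN_cv. Qed.

Lemma inv_succ_le1 k : / (INR k + 1) <= 1.
Proof.
rewrite -Rinv_1; apply: Rinv_le_contravar; first lra.
by have := pos_INR k; lra.
Qed.

Lemma le0_of_le_mul_inv (a c : R) : (forall k : nat, a <= c * / (INR k + 1)) -> a <= 0.
Proof.
move=> a_le; rewrite -(Rmult_0_r c).
exact: Rle_cv_lim a_le (Un_cv_const a) (CV_mult _ _ _ _ (Un_cv_const c) Un_cv_inv_succ).
Qed.

Lemma inf_approx (T : Type) (P : T -> Prop) (f : T -> R) (b : R) :
  (exists x, P x) -> (forall x, P x -> b <= f x) ->
  exists d, (forall x, P x -> d <= f x) /\
            forall e, 0 < e -> exists x, P x /\ f x < d + e.
Proof.
move=> [x0 Px0] f_ge_b.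
pose E r := exists x, P x /\ r = - f x.
have E_bound : bound E by exists (- b) => _ [x [Px ->]]; have := f_ge_b x Px; lra.
have E_ne : exists r, E r by exists (- f x0), x0.
have [L [L_ub L_least]] := completeness _ E_bound E_ne.
exists (- L); split=> [x Px | e e_gt0].
  have : E (- f x) by exists x.
  by move/L_ub; lra.
apply: NNPP => no_approx.
suff : L <= L - e by lra.
apply: L_least => _ [x [Px ->]].
suff : ~ f x < - L + e by lra.
by move=> fx_lt; apply: no_approx; exists x.
Qed.

Lemma Cauchy_crit_coord n (u : nat -> 'cV[R]_n) :
  (forall k l, dist2 (u k) (u l) <= 2 * / (INR k + 1) + 2 * / (INR l + 1)) ->
  forall i, Cauchy_crit (fun k => u k i ord0).
Proof.
move=> u_close i e e_gt0.
have [N [N_inv_lt N_gt0]] : exists N, / INR N < e * e / 4 /\ (0 < N)%coq_nat.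
  by apply: archimed_cor1; nra.
have inv_le j : (j >= N)%coq_nat -> / (INR j + 1) <= / INR N.
  move=> le_Nj; apply: Rinv_le_contravar; first exact: lt_0_INR.
  by have := le_INR _ _ le_Nj; lra.
exists N => k l le_Nk le_Nl; rewrite /R_dist -(Rabs_right e); last lra.
apply: Rsqr_lt_abs_0.
have term_le := rsum_ge_term i (fun j => Rle_0_sqr (u k j ord0 - u l j ord0)).
rewrite /Rsqr -/(dist2 (u k) (u l)) in term_le *.
have := u_close k l; have := inv_le k le_Nk; have := inv_le l le_Nl; lra.
Qed.

Lemma cV_cauchy_cv n (u : nat -> 'cV[R]_n) :
  (forall i, Cauchy_crit (fun k => u k i ord0)) ->
  exists p : 'cV[R]_n, forall i j, Un_cv (fun k => u k i j) (p i j).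
Proof.
move=> u_cauchy; exists (\matrix_(i, j) proj1_sig (R_complete _ (u_cauchy i)))%R => i j.
by rewrite mxE (fintype.ord1 j); exact: proj2_sig (R_complete _ _).
Qed.

Lemma Un_cv_dist2 n (u : nat -> 'cV[R]_n) (z p : 'cV[R]_n) :
  (forall i j, Un_cv (fun k => u k i j) (p i j)) ->
  Un_cv (fun k => dist2 z (u k)) (dist2 z p).
Proof.
move=> u_cv; apply: Un_cv_rsum => i.
by apply: CV_mult; apply: CV_minus => //; exact: Un_cv_const.
Qed.

Lemma nearest_point_exists n (K : vset n) (z : 'cV[R]_n) :
  (exists x, K x) -> (forall x y, K x -> K y -> K (vscale (/2) (vadd x y))) ->
  is_closed K ->
  exists2 p, K p & forall t, K t -> dist2 z p <= dist2 z t.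
Proof.
move=> K_ne K_mid K_closed.
have [d [d_le d_approx]] := inf_approx K_ne (fun t _ => dist2_ge0 z t).
have [u u_approx] := ClassicalEpsilon.choice _ (fun k => d_approx _ (RinvN_pos k)).
have u_close k l : dist2 (u k) (u l) <= 2 * / (INR k + 1) + 2 * / (INR l + 1).
  have [Kk dk] := u_approx k; have [Kl dl] := u_approx l.
  by rewrite (dist2_midpoint z); have := d_le _ (K_mid _ _ Kk Kl); lra.
have [p u_cv] := cV_cauchy_cv (Cauchy_crit_coord u_close).
exists p => [|t Kt]; first by apply: (K_closed u) => // k; case: (u_approx k).
apply: Rle_trans _ _ _ _ (d_le t Kt).
have := CV_plus _ _ _ _ (Un_cv_const d) Un_cv_inv_succ; rewrite Rplus_0_r => d_lim.
apply: (Rle_cv_lim _ (Un_cv_dist2 z u_cv) d_lim) => k.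
by case: (u_approx k) => _; lra.
Qed.

Lemma nearest_point_cone_variational n (K : vset n) (z p : 'cV[R]_n) :
  is_cone K -> K p -> (forall t, K t -> dist2 z p <= dist2 z t) ->
  (forall s, K s -> dot z s <= dot p s) /\ dot p p <= dot z p.
Proof.
move=> [_ [K_add K_scale]] Kp p_nearest; split=> [s Ks|].
- suff : 2 * (dot z s - dot p s) <= 0 by lra.
  apply: (le0_of_le_mul_inv (c := dot s s)) => k.
  have l_gt0 := RinvN_pos k; set l := / (INR k + 1) in l_gt0 *.
  have := p_nearest _ (K_add _ _ Kp (K_scale l s (Rlt_le _ _ l_gt0) Ks)).
  have -> : dist2 z (vadd p (vscale l s)) =
      dist2 z p + -2 * l * dot z s + 2 * l * dot p s + l * l * dot s s.
    by rewrite /dist2 /dot -!rsumZ -!rsumD; apply: eq_bigr => i _; rewrite !mxE; ring.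
  nra.
- suff : 2 * (dot p p - dot z p) <= 0 by lra.
  apply: (le0_of_le_mul_inv (c := dot p p)) => k.
  have l_gt0 := RinvN_pos k; have l_le1 := inv_succ_le1 k.
  set l := / (INR k + 1) in l_gt0 l_le1 *.
  have := p_nearest _ (K_scale (1 - l) p ltac:(lra) Kp).
  have -> : dist2 z (vscale (1 - l) p) =
      dist2 z p + 2 * l * dot z p + -2 * l * dot p p + l * l * dot p p.
    by rewrite /dist2 /dot -!rsumZ -!rsumD; apply: eq_bigr => i _; rewrite !mxE; ring.
  nra.
Qed.

Lemma closed_cone_separation n (K : vset n) (z : 'cV[R]_n) :
  is_cone K -> is_closed K -> ~ K z ->
  exists y, (forall t, K t -> 0 <= dot y t) /\ dot y z < 0.
Proof.
move=> K_cone K_closed Kz; have [K_ne [K_add K_scale]] := K_cone.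
have K_mid x y : K x -> K y -> K (vscale (/2) (vadd x y)).
  by move=> Kx Ky; apply: K_scale (K_add _ _ Kx Ky); lra.
have [p Kp p_nearest] := nearest_point_exists z K_ne K_mid K_closed.
have [p_obtuse p_self] := nearest_point_cone_variational K_cone Kp p_nearest.
have z_far : 0 < dist2 z p by apply: dist2_gt0 => z_eq_p; apply: Kz; rewrite z_eq_p.
exists (vadd p (vscale (-1) z)); split=> [t Kt|]; rewrite dot_vadd_vscale.
  by have := p_obtuse t Kt; lra.
by rewrite dist2E (dotC p z) in z_far *; lra.
Qed.

Section WeightedPenrose.
Import GRing.Theory.
Local Open Scope ring_scope.

Variables (T : comPzRingType) (m n : nat) (M : 'M[T]_m) (N : 'M[T]_n).
Variables (A : 'M[T]_(m, n)) (X : 'M[T]_(n, m)).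
Hypotheses (NT : N^T = N) (MM : M *m M = 1%:M) (NN : N *m N = 1%:M).
Hypothesis MA_AN : M *m A = A *m N.
Hypothesis penrose1 : A *m N *m X *m M *m A = A.
Hypothesis penrose4 : N *m (X *m M *m A)^T *m N = X *m M *m A.

Let S := N *m X *m M *m A.

Lemma weighted_penrose_sym : S^T = S.
Proof.
have -> : S = N *m (X *m M *m A) by rewrite /S !mulmxA.
by rewrite trmx_mul NT -[in RHS]penrose4 !mulmxA NN mul1mx.
Qed.

Lemma weighted_penrose_idem : S *m N *m S = S *m N.
Proof.
have SN : S *m N = N *m X *m A.
  by rewrite /S -mulmxA -MA_AN !mulmxA -(mulmxA _ M M) MM mulmx1.
rewrite SN; have -> : N *m X *m A *m S = N *m X *m (A *m N *m X *m M *m A).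
  by rewrite /S !mulmxA.
by rewrite penrose1.
Qed.

Lemma weighted_penrose_selfadjoint :
  (N *m (X *m M *m A *m N))^T = N *m (X *m M *m A *m N).
Proof.
have -> : N *m (X *m M *m A *m N) = S *m N by rewrite /S !mulmxA.
by rewrite -weighted_penrose_idem trmx_mul (trmx_mul S N) weighted_penrose_sym NT mulmxA.
Qed.

End WeightedPenrose.

Section IndefiniteInnerProduct.
Import GRing.Theory.
Local Open Scope ring_scope.

Lemma mmulE p q r (B : 'M[R]_(p, q)) (C : 'M[R]_(q, r)) : mmul B C = B *m C.
Proof. by apply/matrixP => i j; rewrite !mxE. Qed.

Lemma idmE n : idm n = 1%:M.
Proof. by apply/matrixP => i j; rewrite !mxE; case: (i == j). Qed.

Lemma is_weightE n (W : 'M[R]_n) : is_weight W <-> W^T = W /\ W *m W = 1%:M.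
Proof. by rewrite /is_weight mmulE idmE. Qed.

Lemma iprodE n (W : 'M[R]_n) x y : iprod W x y = (x^T *m (W *m y)) ord0 ord0.
Proof. by rewrite /iprod mmulE !mxE; apply: eq_bigr => i _; rewrite !mxE. Qed.

Lemma dotE n (x y : 'cV[R]_n) : dot x y = (x^T *m y) ord0 ord0.
Proof. by rewrite !mxE; apply: eq_bigr => i _; rewrite !mxE. Qed.

Lemma iprod_weight_dot n (W : 'M[R]_n) (y t : 'cV[R]_n) :
  is_weight W -> iprod W (W *m y) t = dot y t.
Proof.
move/is_weightE=> [WT WW].
by rewrite iprodE dotE trmx_mul WT -mulmxA (mulmxA W) WW mul1mx.
Qed.

Lemma iprod_selfadjoint n (W Q : 'M[R]_n) (x y : 'cV[R]_n) :
  W^T = W -> (W *m Q)^T = W *m Q -> iprod W (Q *m x) y = iprod W x (Q *m y).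
Proof.
move=> WT WQ_sym; rewrite !iprodE !mulmxA trmx_mul -(mulmxA x^T W) -(mulmxA x^T Q^T).
by rewrite -[in Q^T *m W]WT -trmx_mul WQ_sym.
Qed.

Lemma selfadjoint_cone_dual n (W Q : 'M[R]_n) (K : vset n) :
  is_weight W -> (W *m Q)^T = W *m Q -> is_cone K -> is_closed K ->
  (forall s, K s -> K (Q *m s)) <-> (forall s, idual W K s -> idual W K (Q *m s)).
Proof.
move=> W_weight WQ_sym K_cone K_closed; have [WT _] := W_weight.
split=> [QK s Ks t Kt | QKd s Ks].
  by rewrite iprod_selfadjoint //; apply/Ks/QK.
apply: NNPP => QsK.
have [y [y_dual y_sep]] := closed_cone_separation K_cone K_closed QsK.
have Wy_dual : idual W K (W *m y) by move=> t Kt; rewrite iprod_weight_dot //; exact: y_dual.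
have := QKd _ Wy_dual s Ks.
by rewrite iprod_selfadjoint // iprod_weight_dot //; lra.
Qed.

Lemma vsubset_iimgP p q (W : 'M[R]_p) (B : 'M[R]_(q, p)) (S : vset p) (T : vset q) :
  vsubset (iimg W B S) T <-> forall s, S s -> T (B *m W *m s).
Proof.
rewrite /vsubset /iimg /imul; split=> [ST s Ss | ST _ [s Ss ->]].
  by apply: ST; exists s => //; rewrite !mmulE.
by rewrite !mmulE; exact: ST.
Qed.

End IndefiniteInnerProduct.

Theorem lemma3p3 (m n : nat) (M : 'M[R]_m) (N : 'M[R]_n) (A : 'M[R]_(m, n))
  (X : 'M[R]_(n, m)) (K : vset n) :
  is_weight M -> is_weight N ->
  mmul M A = mmul A N ->
  is_imp M N A X ->
  is_cone K -> is_closed K ->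
  (vsubset (iimg N (imul M X A) K) K <->
   vsubset (iimg N (imul M X A) (idual N K)) (idual N K)).
Proof.
move=> /is_weightE [_ MM] N_weight MA_AN [penrose1 _ _ penrose4] K_cone K_closed.
move/is_weightE: (N_weight) => [NT NN]; rewrite !mmulE in MA_AN.
rewrite /imul /iadj !mmulE in penrose1 penrose4.
rewrite !vsubset_iimgP /imul !mmulE.
apply: selfadjoint_cone_dual => //.
exact: weighted_penrose_selfadjoint NT MM NN MA_AN penrose1 penrose4.
Qed.
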